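(* Let $n$ be a positive integer of the form $p_1^{\alpha_1}p_2^{\alpha_2}\cdots p_t^{\alpha_t}$, where $\alpha_i\ge 0$ and the $p_i$ are primes with $p_i\ge 5$ for $1\le i\le t$. Then there exists a cyclic DCA$(4,6n+1;6n)$ satisfying P1 and P2. Consequently there exists a cyclic DCA$(4,2p+1;2p)$ satisfying P1 and P2 for $2p\in\{30, 42, 66, 78, 102, 114, 138, 150, 174, 186, 210, 222, 246, 258, 282, 294, 318, 330, 354\}$.
   Context: A difference covering array DCA$(k,\eta;n)$ over $\mathbb{Z}_n$ (a cyclic DCA) is an $\eta\times k$ matrix $Q=[q(i,j)]$ with entries in $\mathbb{Z}_n$ such that for every pair of distinct columns $j,j'$ the multiset $\{q(i,j)-q(i,j') : 0\le i\le \eta-1\}$ contains every element of $\mathbb{Z}_n$ at least once. A DCA$(k,n+1;n)$ is taken in normalized form: all entries of its last row (row $n$) and last column (column $k-1$) equal $0$. It satisfies P1 if $0$ occurs at least twice in every column, and P2 if for all distinct columns $j,j'$ with $j\neq k-1\neq j'$, the set $\{q(i,j)-q(i,j') : 0\le i\le n-1\}$ equals $\mathbb{Z}_n\setminus\{0\}$. *)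

From mathcomp Require Import all_boot.
Set Implicit Arguments. Unset Strict Implicit. Unset Printing Implicit Defensive.

(* Entries of Z_m are represented by 'I_m; an eta x k array over Z_m is
   Q : 'I_eta -> 'I_k -> 'I_m (Q i j = entry in row i, column j). *)

Definition zdiff (m : nat) (a b : 'I_m) : nat := (a + (m - b)) %% m.

Definition is_DCA (k eta m : nat) (Q : 'I_eta -> 'I_k -> 'I_m) : Prop :=
  forall j j' : 'I_k, j != j' ->
    forall d : 'I_m, exists i : 'I_eta, zdiff (Q i j) (Q i j') = d.

Definition normalized (k m : nat) (Q : 'I_m.+1 -> 'I_k -> 'I_m) : Prop :=
  (forall j : 'I_k, nat_of_ord (Q ord_max j) = 0) /\
  (forall (i : 'I_m.+1) (j : 'I_k), nat_of_ord j = k.-1 -> nat_of_ord (Q i j) = 0).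

Definition P1 (k m : nat) (Q : 'I_m.+1 -> 'I_k -> 'I_m) : Prop :=
  forall j : 'I_k, 2 <= #|[set i : 'I_m.+1 | nat_of_ord (Q i j) == 0]|.

Definition P2 (k m : nat) (Q : 'I_m.+1 -> 'I_k -> 'I_m) : Prop :=
  forall j j' : 'I_k, j != j' -> nat_of_ord j != k.-1 -> nat_of_ord j' != k.-1 ->
    forall d : nat,
      (exists i : 'I_m.+1, (i < m) /\ zdiff (Q i j) (Q i j') = d) <-> (0 < d < m).

Definition exists_good_DCA (k m : nat) : Prop :=
  exists Q : 'I_m.+1 -> 'I_k -> 'I_m,
    [/\ is_DCA Q, normalized Q, P1 Q & P2 Q].

From mathcomp Require Import all_boot all_algebra zify.
Set Implicit Arguments. Unset Strict Implicit. Unset Printing Implicit Defensive.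
Import GRing.Theory.

(* Since gcd(n, 6) = 1, Z_6n = Z_6 x Z_n as groups, so it suffices to build the
   array over Z_6 x Z_n.  Write n = 2h + 1.  Besides the zero row, its rows are
   - (b, 0) for the six rows b of a normalized DCA(4,7;6) over Z_6 minus its zero row;
   - (0, x (1, 2, 3, 0)) for x = 1 .. 2h;
   - (a_s, x c_s) for x = 1 .. h, in ten blocks s with a_s in Z_6^4, c_s in Z^4.
   For each pair of columns and each nonzero difference in Z_6 there are two blocks
   s, s' realising it whose multiplier differences are c and -c, with 0 < |c| < 5
   prime to n; so x c and -x c, x = 1 .. h, run over all nonzero residues mod n.
   The multiplier differences of the second kind of rows are likewise prime to n. *)

Lemma pairBE (M1 M2 : zmodType) (a b : M1) (c d : M2) :
  ((a, c) - (b, d) = (a - b, c - d))%R.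
Proof. by []. Qed.

Lemma zdiff_Zp k (a b : 'I_k.+1) : zdiff a b = (a - b)%R :> nat.
Proof. by rewrite /zdiff /= modnDmr. Qed.

Lemma zdiff_mod m d (a b : 'I_m) : d %| m -> zdiff a b %% d = (a + (d - b %% d)) %% d.
Proof.
move=> d_dvd_m; rewrite /zdiff (modn_dvdm _ d_dvd_m); apply/eqP.
rewrite -(eqn_modDr b) -addnA subnK ?(ltnW (ltn_ord b)) //.
have m_gt0 : 0 < m by apply: leq_ltn_trans (ltn_ord b).
have b_mod_le : b %% d <= d by rewrite ltnW // ltn_pmod // (dvdn_gt0 m_gt0).
rewrite {2}(divn_eq b d) addnCA modnMDl -addnA subnK // modnDr.
by rewrite -modnDmr (eqP d_dvd_m) addn0.
Qed.

Section ZpScale.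
Variable k : nat.
Local Notation N := k.+1.
Variable c : int.
Hypothesis N_coprime_c : coprime N `|c|.

Lemma Zp_mulrz_eq0 (z : 'I_N) : (z *~ c == 0)%R = (z == 0)%R.
Proof.
have -> : (z *~ c == 0)%R = (z *+ `|c|%N == 0)%R.
  by case: c => m; rewrite ?NegzE ?mulrNz ?oppr_eq0 -pmulrn.
rewrite Zp_mulrn -val_eqE /= -/(dvdn N _) Gauss_dvdl //.
by rewrite /dvdn modn_small.
Qed.

Lemma Zp_mulrz_inj : injective (fun z : 'I_N => z *~ c)%R.
Proof.
by move=> z z' /eqP; rewrite -subr_eq0 -mulrzBl Zp_mulrz_eq0 subr_eq0 => /eqP.
Qed.

Lemma Zp_mulrz_surj (y : 'I_N) : exists z, (z *~ c)%R = y.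
Proof. by have [g _ gK] := injF_bij Zp_mulrz_inj; exists (g y); rewrite gK. Qed.

End ZpScale.

Section ChineseRemainder.
Variables p q : nat.
Local Notation P := p.+1.
Local Notation Q := q.+1.

Definition crt (e : 'I_P * 'I_Q) : nat := chinese P Q e.1 e.2 %% (P * Q).

Lemma crt_ltn e : crt e < P * Q.
Proof. by rewrite ltn_pmod. Qed.

Definition crt_ord e : 'I_(P * Q) := Ordinal (crt_ltn e).

Lemma crt0 : crt 0%R = 0.
Proof. by rewrite /crt /chinese !mul0n mod0n. Qed.

Hypothesis PQ_coprime : coprime P Q.

Lemma crt_modl e : crt e %% P = e.1.
Proof.
by rewrite /crt (modn_dvdm _ (dvdn_mulr _ (dvdnn P))) chinese_modl // modn_small.
Qed.

Lemma crt_modr e : crt e %% Q = e.2.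
Proof.
by rewrite /crt (modn_dvdm _ (dvdn_mull _ (dvdnn Q))) chinese_modr // modn_small.
Qed.

Lemma eqn_crt x y : x < P * Q -> y < P * Q ->
  x %% P = y %% P -> x %% Q = y %% Q -> x = y.
Proof.
move=> x_lt y_lt xyP xyQ.
have : x == y %[mod P * Q] by rewrite chinese_remainder // xyP xyQ !eqxx.
by rewrite !modn_small // => /eqP.
Qed.

Lemma crt_inj : injective crt.
Proof.
move=> [a b] [a' b'] eq_crt; congr pair; apply: val_inj.
  by have := congr1 (modn^~ P) eq_crt; rewrite /= !crt_modl.
by have := congr1 (modn^~ Q) eq_crt; rewrite /= !crt_modr.
Qed.

Lemma crt_inZp d : d < P * Q -> crt (inZp d, inZp d) = d.
Proof. by move=> d_lt; apply: eqn_crt; rewrite ?crt_ltn ?crt_modl ?crt_modr. Qed.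

Lemma crt_eq0 e : (crt e == 0) = (e == 0)%R.
Proof. by rewrite -[0 in LHS]crt0 (inj_eq crt_inj). Qed.

Lemma zdiff_crt e e' : zdiff (crt_ord e) (crt_ord e') = crt (e - e')%R.
Proof.
apply: eqn_crt; rewrite ?crt_ltn ?ltn_pmod //.
  rewrite zdiff_mod ?dvdn_mulr //= -modnDml !crt_modl.
  by rewrite -[LHS]/(zdiff e.1 e'.1) zdiff_Zp.
rewrite zdiff_mod ?dvdn_mull //= -modnDml !crt_modr.
by rewrite -[LHS]/(zdiff e.2 e'.2) zdiff_Zp.
Qed.

End ChineseRemainder.

Section CrtArray.
Variables p q k : nat.
Local Notation P := p.+1.
Local Notation Q := q.+1.
Local Notation m := (P * Q).
Hypothesis PQ_coprime : coprime P Q.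
Variable E : 'I_m.+1 -> 'I_k -> 'I_P * 'I_Q.

Definition crt_array i j : 'I_m := crt_ord (E i j).

Lemma is_DCA_crt_array :
  (forall j j', j != j' -> forall e, exists i, (E i j - E i j')%R = e) ->
  is_DCA crt_array.
Proof.
move=> E_cover j j' neq_jj' d; have [i E_d] := E_cover j j' neq_jj' (inZp d, inZp d).
by exists i; rewrite (zdiff_crt PQ_coprime) E_d crt_inZp.
Qed.

Lemma normalized_crt_array :
  (forall j, E ord_max j = 0%R) ->
  (forall i (j : 'I_k), j = k.-1 :> nat -> E i j = 0%R) ->
  normalized crt_array.
Proof.
by move=> E_last E_col; split=> [j | i j /E_col E0]; rewrite /= ?E_last ?E0 crt0.
Qed.

Lemma P1_crt_array :
  (forall j, 1 < #|[set i | E i j == 0%R]|) -> P1 crt_array.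
Proof.
move=> E_zeros j; congr (_ < _): (E_zeros j); apply: eq_card => i.
by rewrite !inE crt_eq0.
Qed.

Lemma P2_crt_array :
  (forall j j' : 'I_k, j != j' -> j != k.-1 :> nat -> j' != k.-1 :> nat ->
     forall i : 'I_m.+1, i < m -> E i j != E i j') ->
  (forall j j' : 'I_k, j != j' -> j != k.-1 :> nat -> j' != k.-1 :> nat ->
     forall e, e != 0%R -> exists2 i : 'I_m.+1, i < m & (E i j - E i j')%R = e) ->
  P2 crt_array.
Proof.
move=> E_sep E_cover j j' neq_jj' j_last j'_last d; split.
  move=> [i [i_lt <-]]; rewrite (zdiff_crt PQ_coprime) crt_ltn andbT lt0n.
  by rewrite (crt_eq0 PQ_coprime) subr_eq0 E_sep.
case/andP=> d_gt0 d_lt; have e_neq0 : (inZp d, inZp d) != 0%R :> 'I_P * 'I_Q.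
  by rewrite -(crt_eq0 PQ_coprime) crt_inZp // -lt0n.
have [i i_lt E_d] := E_cover j j' neq_jj' j_last j'_last _ e_neq0.
by exists i; rewrite (zdiff_crt PQ_coprime) E_d crt_inZp.
Qed.

End CrtArray.

Definition basesA : seq (seq nat) :=
  [:: [:: 1; 2; 3; 0]; [:: 1; 3; 2; 0]; [:: 2; 1; 5; 0]; [:: 2; 5; 4; 0];
      [:: 3; 4; 1; 0]; [:: 3; 5; 1; 0]; [:: 4; 1; 3; 0]; [:: 4; 2; 5; 0];
      [:: 5; 3; 4; 0]; [:: 5; 4; 2; 0]].
Definition multsA : seq (seq int) :=
  [:: [:: -2; 1; -1; 0]; [:: 2; -1; 3; 0]; [:: 2; 1; 3; 0]; [:: -2; 1; -3; 0];
      [:: 4; 1; 3; 0]; [:: -4; -1; -3; 0]; [:: 2; -1; 1; 0]; [:: -2; -1; -3; 0];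
      [:: 2; 1; 3; 0]; [:: -2; -1; -3; 0]]%Z.
Definition basesB : seq (seq nat) :=
  [:: [:: 0; 1; 3; 0]; [:: 1; 3; 0; 0]; [:: 2; 5; 4; 0]; [:: 3; 0; 1; 0];
      [:: 4; 2; 5; 0]; [:: 5; 4; 2; 0]].
Definition multsC : seq int := [:: 1; 2; 3; 0]%Z.

Definition baseA (s j : nat) : 'I_6 := inZp (nth 0 (nth [::] basesA s) j).
Definition multA (s j : nat) : int := nth 0%R (nth [::] multsA s) j.
Definition baseB (r j : nat) : 'I_6 := inZp (nth 0 (nth [::] basesB r) j).
Definition multC (j : nat) : int := nth 0%R multsC j.

(* The [forall]/[exists] quantifiers of fintype do not evaluate ([card] is
   locked), so the finite checks below quantify through [inZp] instead. *)
Definition forall_Zp n (P : pred 'I_n.+1) : bool :=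
  all (fun i => P (inZp i)) (iota 0 n.+1).
Definition exists_Zp n (P : pred 'I_n.+1) : bool :=
  has (fun i => P (inZp i)) (iota 0 n.+1).

Lemma forall_ZpP n (P : pred 'I_n.+1) : reflect (forall i, P i) (forall_Zp P).
Proof.
apply: (iffP allP) => [P_all i | P_all i _]; last exact: P_all.
by rewrite -[i]valZpK; apply: P_all; rewrite mem_iota ltn_ord.
Qed.

Lemma exists_ZpP n (P : pred 'I_n.+1) : reflect (exists i, P i) (exists_Zp P).
Proof.
apply: (iffP hasP) => [[i _ Pi] | [i Pi]]; first by exists (inZp i).
by exists (nat_of_ord i); rewrite ?valZpK // mem_iota /= ltn_ord.
Qed.

Lemma baseA_cover :
  forall_Zp (fun j : 'I_4 => forall_Zp (fun j' : 'I_4 => forall_Zp (fun a : 'I_6 =>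
    [&& j != j' & a != 0%R] ==>
    exists_Zp (fun s : 'I_10 => exists_Zp (fun s' : 'I_10 =>
      [&& baseA s j - baseA s j' == a, baseA s' j - baseA s' j' == a,
          multA s' j - multA s' j' == - (multA s j - multA s j') &
          (0 < `|multA s j - multA s j'|%N < 5)%N]%R))))).
Proof. by vm_compute. Qed.

Lemma baseA_sep :
  forall_Zp (fun s : 'I_10 => forall_Zp (fun j : 'I_4 => forall_Zp (fun j' : 'I_4 =>
    [&& j != j', j != 3 :> nat & j' != 3 :> nat] ==> (baseA s j != baseA s j')))).
Proof. by vm_compute. Qed.

Lemma baseB_cover :
  forall_Zp (fun j : 'I_4 => forall_Zp (fun j' : 'I_4 => forall_Zp (fun a : 'I_6 =>
    [&& j != j' & a != 0%R] ==>
    exists_Zp (fun r : 'I_6 => baseB r j - baseB r j' == a)%R))).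
Proof. by vm_compute. Qed.

Lemma baseB_sep :
  forall_Zp (fun r : 'I_6 => forall_Zp (fun j : 'I_4 => forall_Zp (fun j' : 'I_4 =>
    [&& j != j', j != 3 :> nat & j' != 3 :> nat] ==> (baseB r j != baseB r j')))).
Proof. by vm_compute. Qed.

Lemma baseB_zero : forall_Zp (fun j : 'I_4 => exists_Zp (fun r : 'I_6 => baseB r j == 0%R)).
Proof. by vm_compute. Qed.

Lemma multC_small :
  forall_Zp (fun j : 'I_4 => forall_Zp (fun j' : 'I_4 =>
    (j != j') ==> (0 < `|multC j - multC j'|%N < 5)%N)).
Proof. by vm_compute. Qed.

Lemma baseA_col3 s : baseA s 3 = 0%R.
Proof. by apply: val_inj; do 10?case: s => [|s] //; rewrite /baseA /= nth_nil. Qed.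

Lemma multA_col3 s : multA s 3 = 0%R.
Proof. by do 10?case: s => [|s] //; rewrite /multA /= nth_nil. Qed.

Lemma baseB_col3 r : baseB r 3 = 0%R.
Proof. by apply: val_inj; do 6?case: r => [|r] //; rewrite /baseB /= nth_nil. Qed.

Lemma multC_col3 : multC 3 = 0%R. Proof. by []. Qed.

Section Construction.
Variable h : nat.
Local Notation n := h.*2.+1.
Hypothesis coprime_6_n : coprime 6 n.

Lemma coprime_n_small c : 0 < c < 5 -> coprime n c.
Proof.
move=> /andP[c_gt0 c_lt5]; rewrite coprime_sym; apply: (@coprime_dvdl c 12).
  by move: c_gt0 c_lt5; case: c => [|[|[|[|[|]]]]].
by rewrite (_ : 12 = 2 * 6) // coprimeMl coprime_6_n andbT (coprime_dvdl _ coprime_6_n).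
Qed.

Lemma Zp_half (z : 'I_n) : z != 0%R ->
  exists2 x, x < h & (inZp x.+1 = z \/ inZp x.+1 = - z)%R.
Proof.
move=> z_neq0; have z_gt0 : 0 < z by rewrite lt0n; exact: z_neq0.
have [z_le | z_gt] := leqP z h.
  by exists z.-1; [lia | left; rewrite prednK ?valZpK].
have z_lt := ltn_ord z; exists (n - z).-1; first lia.
by right; apply: val_inj; rewrite prednK /= ?subn_gt0 // !modn_small //; lia.
Qed.

Definition entry (i : nat) (j : 'I_4) : 'I_6 * 'I_n :=
  if i < 10 * h then
    (baseA (i %/ h) j, (inZp (i %% h).+1 : 'I_n) *~ multA (i %/ h) j)%R
  else if i < 10 * h + 6 then (baseB (i - 10 * h) j, 0%R)
  else if i < 6 * n then (0%R, (inZp (i - (10 * h + 6)).+1 : 'I_n) *~ multC j)%R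
  else 0%R.

Lemma entryA s x j : s < 10 -> x < h ->
  entry (s * h + x) j = (baseA s j, inZp x.+1 *~ multA s j)%R.
Proof.
move=> s_lt x_lt; have h_gt0 : 0 < h by lia.
rewrite /entry ifT; last by nia.
by rewrite divnMDl // divn_small // addn0 modnMDl modn_small.
Qed.

Lemma entryB r j : r < 6 -> entry (10 * h + r) j = (baseB r j, 0%R).
Proof.
move=> r_lt; rewrite /entry.
have -> : (10 * h + r < 10 * h) = false by lia.
have -> : 10 * h + r < 10 * h + 6 by lia.
by rewrite addKn.
Qed.

Lemma entryC x j : x < h.*2 ->
  entry (10 * h + 6 + x) j = (0%R, inZp x.+1 *~ multC j)%R.
Proof.
move=> x_lt; rewrite /entry.
have -> : (10 * h + 6 + x < 10 * h) = false by lia.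
have -> : (10 * h + 6 + x < 10 * h + 6) = false by lia.
have -> : 10 * h + 6 + x < 6 * n by lia.
by rewrite addKn.
Qed.

Lemma entry_last j : entry (6 * n) j = 0%R.
Proof.
rewrite /entry.
have -> : (6 * n < 10 * h) = false by lia.
have -> : (6 * n < 10 * h + 6) = false by lia.
by rewrite ltnn.
Qed.

Lemma entry_col3 i (j : 'I_4) : j = 3 :> nat -> entry i j = 0%R.
Proof.
move=> j3; rewrite /entry j3 baseA_col3 multA_col3 baseB_col3 multC_col3 !mulr0z.
by case: ifP => // _; case: ifP => // _; case: ifP.
Qed.

Lemma entry_cases i : i < 6 * n ->
  [\/ exists s x, [/\ s < 10, x < h & i = s * h + x],
      exists2 r, r < 6 & i = 10 * h + r
    | exists2 x, x < h.*2 & i = 10 * h + 6 + x].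
Proof.
move=> i_lt; have [i_lt_A | i_ge_A] := ltnP i (10 * h).
  have h_gt0 : 0 < h by case: h i_lt_A => //; rewrite muln0.
  by apply: Or31; exists (i %/ h), (i %% h); rewrite ltn_divLR // ltn_pmod // -divn_eq.
have [i_lt_B | i_ge_B] := ltnP i (10 * h + 6).
  by apply: Or32; exists (i - 10 * h); lia.
by apply: Or33; exists (i - (10 * h + 6)); lia.
Qed.

Lemma entryA_cover (j j' : 'I_4) (a : 'I_6) (y : 'I_n) : j != j' -> a != 0%R -> y != 0%R ->
  exists2 i, i < 6 * n & (entry i j - entry i j' = (a, y))%R.
Proof.
move=> neq_jj' a_neq0 y_neq0.
have /forall_ZpP/(_ j)/forall_ZpP/(_ j')/forall_ZpP/(_ a) := baseA_cover.
rewrite neq_jj' a_neq0 /= => /exists_ZpP[s /exists_ZpP[s' /and4P[]]].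
move=> /eqP base_s /eqP base_s' /eqP mult_s' mult_small.
have s_lt := ltn_ord s; have s'_lt := ltn_ord s'.
have [z z_y] := Zp_mulrz_surj (coprime_n_small mult_small) y.
have z_neq0 : z != 0%R by apply: contraNneq y_neq0 => z0; rewrite -z_y z0 mul0rz.
have [x x_lt [x_z | x_z]] := Zp_half z_neq0.
  exists (s * h + x); first nia.
  by rewrite !entryA // pairBE base_s -mulrzBr x_z z_y.
exists (s' * h + x); first nia.
by rewrite !entryA // pairBE base_s' -mulrzBr mult_s' x_z mulrNz mulNrz opprK z_y.
Qed.

Lemma entryB_cover (j j' : 'I_4) (a : 'I_6) : j != j' -> a != 0%R ->
  exists2 i, i < 6 * n & (entry i j - entry i j' = (a, 0))%R.
Proof.
move=> neq_jj' a_neq0.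
have /forall_ZpP/(_ j)/forall_ZpP/(_ j')/forall_ZpP/(_ a) := baseB_cover.
rewrite neq_jj' a_neq0 /= => /exists_ZpP[r /eqP base_r]; have r_lt := ltn_ord r.
by exists (10 * h + r); [lia | rewrite !entryB // pairBE base_r subrr].
Qed.

Lemma entryC_cover (j j' : 'I_4) (y : 'I_n) : j != j' -> y != 0%R ->
  exists2 i, i < 6 * n & (entry i j - entry i j' = (0, y))%R.
Proof.
move=> neq_jj' y_neq0.
have /forall_ZpP/(_ j)/forall_ZpP/(_ j') := multC_small; rewrite neq_jj' /= => mult_small.
have [z z_y] := Zp_mulrz_surj (coprime_n_small mult_small) y.
have z_neq0 : z != 0%R by apply: contraNneq y_neq0 => z0; rewrite -z_y z0 mul0rz.
have z_gt0 : 0 < z by rewrite lt0n; exact: z_neq0.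
have z_lt := ltn_ord z; exists (10 * h + 6 + z.-1); first lia.
by rewrite !entryC ?pairBE ?subrr -?mulrzBr ?prednK ?valZpK ?z_y //; lia.
Qed.

Lemma entry_cover (j j' : 'I_4) e : j != j' -> e != 0%R ->
  exists2 i, i < 6 * n & (entry i j - entry i j' = e)%R.
Proof.
move=> neq_jj'; case: e => a y.
have [-> | a_neq0] := eqVneq a 0%R; have [-> | y_neq0] := eqVneq y 0%R => // _.
- exact: entryC_cover.
- exact: entryB_cover.
- exact: entryA_cover.
Qed.

Lemma entry_sep (j j' : 'I_4) i : j != j' -> j != 3 :> nat -> j' != 3 :> nat ->
  i < 6 * n -> entry i j != entry i j'.
Proof.
move=> neq_jj' j_neq3 j'_neq3.
case/entry_cases=> [[s [x [s_lt x_lt ->]]] | [r r_lt ->] | [x x_lt ->]].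
- have /forall_ZpP/(_ (Ordinal s_lt))/forall_ZpP/(_ j)/forall_ZpP/(_ j') := baseA_sep.
  by rewrite neq_jj' j_neq3 j'_neq3 !entryA // xpair_eqE => /negPf ->.
- have /forall_ZpP/(_ (Ordinal r_lt))/forall_ZpP/(_ j)/forall_ZpP/(_ j') := baseB_sep.
  by rewrite neq_jj' j_neq3 j'_neq3 !entryB // xpair_eqE => /negPf ->.
have /forall_ZpP/(_ j)/forall_ZpP/(_ j') := multC_small; rewrite neq_jj' /= => mult_small.
rewrite !entryC // xpair_eqE eqxx -subr_eq0 -mulrzBr.
rewrite Zp_mulrz_eq0 ?coprime_n_small // -val_eqE /= modn_small //; lia.
Qed.

Lemma entry_zeros j : 1 < #|[set i : 'I_(6 * n).+1 | entry i j == 0%R]|.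
Proof.
have /forall_ZpP/(_ j)/exists_ZpP[r /eqP base_r] := baseB_zero; have r_lt := ltn_ord r.
have i_lt : 10 * h + r < (6 * n).+1 by lia.
apply/card_gt1P; exists (Ordinal i_lt), ord_max.
by rewrite !inE entryB // entry_last base_r eqxx -val_eqE /=; split=> //; lia.
Qed.

Lemma exists_good_DCA_odd : exists_good_DCA 4 (6 * n).
Proof.
exists (crt_array (fun i j => entry i j)); split.
- apply: (is_DCA_crt_array coprime_6_n) => j j' neq_jj' e.
  have [-> | e_neq0] := eqVneq e 0%R.
    by exists ord_max; rewrite /= !entry_last subrr.
  have [i i_lt <-] := entry_cover neq_jj' e_neq0.
  by exists (Ordinal (ltnW i_lt : i < (6 * n).+1)).
- by apply: normalized_crt_array => [j | i j]; [exact: entry_last | exact: entry_col3].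
- by apply: (P1_crt_array coprime_6_n) => j; exact: entry_zeros.
apply: (P2_crt_array coprime_6_n) => j j' neq_jj' j_neq3 j'_neq3 => [i | e e_neq0].
  exact: entry_sep.
have [i i_lt <-] := entry_cover neq_jj' e_neq0.
by exists (Ordinal (ltnW i_lt : i < (6 * n).+1)).
Qed.

End Construction.

Lemma exists_good_DCA_6n n : coprime 6 n -> exists_good_DCA 4 (6 * n).
Proof.
move=> co_6n; have /andP[/[!coprime2n] n_odd _] : coprime 2 n && coprime 3 n.
  by rewrite -coprimeMl.
by move: co_6n; rewrite -[n]odd_double_half n_odd add1n; apply: exists_good_DCA_odd.
Qed.

Theorem mainTheorem14 :
  (forall n : nat, 0 < n ->
     (forall p : nat, prime p -> p %| n -> 5 <= p) ->
     exists_good_DCA 4 (6 * n)) /\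
  (forall m : nat,
     m \in [:: 30; 42; 66; 78; 102; 114; 138; 150; 174; 186; 210; 222; 246;
               258; 282; 294; 318; 330; 354] ->
     exists_good_DCA 4 m).
Proof.
split=> [n _ n_pdiv | m m_in].
  have ndvd p : prime p -> p < 5 -> ~~ (p %| n).
    by move=> p_pr p_lt; apply/negP => /(n_pdiv p p_pr); rewrite leqNgt p_lt.
  apply: exists_good_DCA_6n; rewrite (_ : 6 = 2 * 3) // coprimeMl.
  by rewrite !prime_coprime ?ndvd.
have /andP[dvd6_m co_6m] : (6 %| m) && coprime 6 (m %/ 6) by move: m m_in; apply/allP.
by rewrite -(divnK dvd6_m) mulnC; apply: exists_good_DCA_6n.
Qed.
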